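(* In the setting described in the context, suppose that for all $t=1,\dots,n$ and $j=1,\dots,m+1$ $$\mathsf E[\mathbf 1_{t,j}]=\frac{\mathsf E\big[G\,\mathbf 1_{\{G\in[\alpha_{j-1},\alpha_j)\}}\big]}{g(\alpha_j)-g(\alpha_{j-1})}\qquad(\ast)$$ and that the random vectors $(\mathbf 1_{t,j})_{j=1,\dots,m+1}$, $t=1,\dots,n$, are independent. Let $X_t=\sum_{j=1}^{m+1}\mathbf 1_{t,j}$ (the number of breached levels). Then for every $t$, $$\mathsf P(X_t\le k)=1-\frac{\mathsf E\big[G\,\mathbf 1_{\{G\in[\alpha_{m-k},\alpha_{m-k+1})\}}\big]}{g(\alpha_{m-k+1})-g(\alpha_{m-k})},\quad 0\le k\le m,\qquad \mathsf P(X_t\le m+1)=1,$$ and the random variables $X_1,\dots,X_n$ are independent.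
   Context: Let $n\ge1$ and let $L=(L_t)_{t=1}^n$ and $M=(M_t)_{t=1}^n$ be real-valued stochastic processes on a probability space $(\Omega,\mathcal F,\mathsf P)$. Assume that for each $t$ the conditional distribution function $F_{M_t\mid M_{t-1},\dots,M_1}(x\mid y_{t-1},\dots,y_1)$ is continuous in $x$. Define $q^{t-1}_{M_t}(u)=\inf\{x: F_{M_t\mid M_{t-1},\dots,M_1}(x\mid L_{t-1},\dots,L_1)\ge u\}$. A distortion function is a non-decreasing $g:[0,1]\to[0,1]$ with $g(0)=0$, $g(1)=1$. Let $g$ be a left-continuous distortion function and let $G$ be a $[0,1]$-valued random variable, independent of $L$ and $M$, with $\mathsf P(G<u)=g(u)$ for all $u\in[0,1]$. Let $0=\alpha_0<\alpha_1<\dots<\alpha_m<\alpha_{m+1}=1$ with $g(\alpha_j)-g(\alpha_{j-1})\neq0$ for all $j$. Let $(G_{t,j})_{t\le n,\,j\le m+1}$ be independent random variables, independent of $(L,M)$, with $G_{t,j}$ distributed as $G$ conditional on $G\in[\alpha_{j-1},\alpha_j)$. Set $\mathbf 1_{t,j}=1$ if $L_t>q^{t-1}_{M_t}(1-G_{t,j})$ and $\mathbf 1_{t,j}=0$ otherwise. *)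

From HB Require Import structures.
From mathcomp Require Import all_boot all_order all_algebra.
From mathcomp Require Import all_classical all_reals all_analysis.
Set Implicit Arguments.
Unset Strict Implicit.
Unset Printing Implicit Defensive.
Import Order.TTheory GRing.Theory Num.Theory.
Import numFieldNormedType.Exports.
Local Open Scope classical_set_scope.
Local Open Scope ring_scope.

Section defs.
Context {d : measure_display} {Omega : measurableType d} {R : realType}.

Definition mutually_independent (P : probability Omega R) (I : eqType)
    (D : set I) (F : I -> set (set Omega)) : Prop :=
  forall (J : seq I) (E : I -> set Omega), uniq J ->
    (forall i, i \in J -> D i /\ F i (E i)) ->
    P (\bigcap_(i in [set i | i \in J]) E i) = \big[*%E/1%E]_(i <- J) P (E i).

Definition sigmaR (X : Omega -> R) : set (set Omega) :=
  [set X @^-1` B | B in [set B : set R | measurable B]].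

Definition sigma_LM (n : nat) (L M : nat -> Omega -> R) : set (set Omega) :=
  <<s [set A | exists s, (1 <= s <= n)%N /\
         exists2 B : set R, measurable B & (A = L s @^-1` B \/ A = M s @^-1` B)] >>.

Definition sigma_past (M : nat -> Omega -> R) (t : nat) : set (set Omega) :=
  <<s [set A | exists s, (1 <= s < t)%N /\
         exists2 B : set R, measurable B & A = M s @^-1` B] >>.

(* Ft x y = F_{M_t | M_{t-1},...,M_1}(x | y_{t-1},...,y_1): a (regular)
   conditional distribution function of M_t given M_{t-1},...,M_1.
   The history (y_{t-1},...,y_1) is encoded as a function y : nat -> R of
   which only the coordinates 1..t-1 matter. *)
Definition is_cond_cdf (P : probability Omega R) (M : nat -> Omega -> R)
    (t : nat) (Ft : R -> (nat -> R) -> R) : Prop :=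
  (forall x (y y' : nat -> R), (forall s, (1 <= s < t)%N -> y s = y' s) ->
     Ft x y = Ft x y') /\
  (forall y : nat -> R,
     {homo (fun x => Ft x y) : a b / a <= b} /\
     (forall x, (Ft z y @[z --> x^'+] --> Ft x y)) /\
     (Ft x y @[x --> -oo] --> (0 : R)) /\ (Ft x y @[x --> +oo] --> (1 : R))) /\
  (forall x (A : set R), measurable A ->
     sigma_past M t ((fun w => Ft x (fun s => M s w)) @^-1` A)) /\
  (* defining property of the conditional probability P(M_t <= x | M_{<t}),
     tested on the generating pi-system of rectangles *)
  (forall x (B : nat -> set R), (forall s, measurable (B s)) ->
     let E := \bigcap_(s in [set s | (1 <= s < t)%N]) (M s @^-1` B s) in
     P (E `&` [set w | M t w <= x]) = (\int[P]_(w in E) (Ft x (fun s => M s w))%:E)%E).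

(* q^{t-1}_{M_t}(u) = inf {x : F(x | L_{t-1},...,L_1) >= u}, as an extended
   real (inf of the empty set is +oo). *)
Definition cond_quantile (Ft : R -> (nat -> R) -> R) (y : nat -> R) (u : R)
    : \bar R :=
  ereal_inf [set x%:E | x in [set x : R | u <= Ft x y]].

Definition breach (L : nat -> Omega -> R) (F : nat -> R -> (nat -> R) -> R)
    (Gtj : nat -> nat -> Omega -> R) (t j : nat) (w : Omega) : bool :=
  ((cond_quantile (F t) (fun s => L s w) (1 - Gtj t j w)) < (L t w)%:E)%E.

Definition breach_vec L F Gtj (m t : nat) (w : Omega) : seq bool :=
  [seq breach L F Gtj t j w | j <- iota 1 m.+1].

Definition breach_count L F Gtj (m t : nat) (w : Omega) : nat :=
  \sum_(1 <= j < m.+2) breach L F Gtj t j w.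

End defs.

Definition itv_co {R : realType} (a b : R) : set R := [set x | a <= x < b].

Definition distortion {R : realType} (g : R -> R) : Prop :=
  g 0 = 0 /\ g 1 = 1 /\
  (forall u, 0 <= u <= 1 -> 0 <= g u <= 1) /\
  (forall u v, 0 <= u -> u <= v -> v <= 1 -> g u <= g v).

(* Almost surely G_{t,j} lies in [alpha_{j-1}, alpha_j), so j |-> G_{t,j} is
   increasing; since the conditional quantile is monotone, the breached levels
   of period t then form a final segment {j0, ..., m+1} of {1, ..., m+1}.
   Hence, up to a null set, X_t <= k exactly when level m-k+1 is not breached,
   and (∗) gives the law of X_t.  Independence of X_1, ..., X_n is inherited
   from that of the breach vectors, X_t being the number of true entries of
   the t-th vector. *)
From HB Require Import structures.
From mathcomp Require Import all_boot all_order all_algebra.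
From mathcomp Require Import all_classical all_reals all_analysis.
From mathcomp Require Import zify.
Import Order.TTheory GRing.Theory Num.Theory.
Import numFieldNormedType.Exports.
Local Open Scope classical_set_scope.
Local Open Scope ring_scope.

Lemma sum_nat_of_bool_count (I : Type) (b : pred I) (s : seq I) :
  (\sum_(i <- s) b i)%N = count b s.
Proof. by elim: s => [|x s IHs]; rewrite ?big_nil ?big_cons //= IHs. Qed.

Lemma count_upclosed_iota_leqE (b : pred nat) m k :
  (forall i j, (0 < i)%N -> (i <= j <= m.+1)%N -> b i -> b j) -> (k <= m)%N ->
  (count b (iota 1 m.+1) <= k)%N = ~~ b (m - k).+1.
Proof.
move=> b_up km.
have -> : iota 1 m.+1 = iota 1 (m - k) ++ (m - k).+1 :: iota (m - k).+2 k.
  by rewrite -[in LHS](subnK km) -addnS iotaD add1n.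
rewrite count_cat /=; have [bj0|nbj0] /= := boolP (b (m - k).+1).
  have -> : count b (iota (m - k).+2 k) = k.
    rewrite -[RHS](size_iota (m - k).+2); apply/eqP; rewrite -all_count.
    by apply/allP => j; rewrite mem_iota => /andP[j0 jm]; apply: b_up bj0; lia.
  by apply/negbTE; rewrite -ltnNge addnCA add1n ltnS leq_addl.
have -> : count b (iota 1 (m - k)) = 0%N.
  apply/eqP; rewrite -leqn0 leqNgt -has_count; apply/hasPn => j.
  rewrite mem_iota => /andP[j0 jm]; apply: contra nbj0; apply: b_up => //; lia.
by rewrite add0n (leq_trans (count_size _ _)) ?size_iota.
Qed.

Lemma measurable_sum_bool {d} {T : measurableType d} {I : eqType}
    (p : pred nat) (b : I -> T -> bool) (s : seq I) :
  (forall i, i \in s -> measurable [set w | b i w]) ->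
  measurable [set w | p (\sum_(i <- s) b i w)%N].
Proof.
elim: s p => [|x s IHs] p mb.
  rewrite (_ : [set w | _] = if p 0%N then setT else set0); first by case: ifP.
  by apply/seteqP; split=> w; rewrite /= big_nil; case: (p 0%N).
have mbx : measurable [set w | b x w] by apply: mb; exact: mem_head.
have {}IHs q := IHs q (fun i si => mb i (@mem_behead _ (x :: s) i si)).
rewrite (_ : [set w | _] =
    [set w | b x w] `&` [set w | p (\sum_(i <- s) b i w)%N.+1] `|`
    ~` [set w | b x w] `&` [set w | p (\sum_(i <- s) b i w)%N]).
  apply: measurableU; apply: measurableI => //.
    exact: (IHs (fun n => p n.+1)).
  exact: measurableC.
apply/seteqP; split=> w; rewrite /= big_cons; case: (b x w) => /=.
- by rewrite add1n => h; left.
- by rewrite add0n => h; right.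
- by rewrite add1n => -[[]|[]].
- by rewrite add0n => -[[]|[]].
Qed.

Lemma ae_eq_set_measure d (T : measurableType d) (R : realType)
    (mu : {measure set T -> \bar R}) (A B : set T) :
  measurable A -> measurable B -> {ae mu, forall w, A w <-> B w} -> mu A = mu B.
Proof.
move=> mA mB [N [mN N0 AB]].
have muDN C : measurable C -> mu C = mu (C `\` N).
  move=> mC; rewrite (measureDI mu mC mN).
  by rewrite (@subset_measure0 _ _ _ mu (C `&` N) N) ?adde0 //; exact: measurableI.
rewrite (muDN A mA) (muDN B mB); congr (mu _).
by apply/seteqP; split=> w [Cw Nw]; split=> //; apply/(contra_notP (@AB w) Nw).
Qed.

Lemma measurable_itv_co {R : realType} (a b : R) : measurable (itv_co a b).
Proof.
rewrite (_ : itv_co _ _ = `[a, b[%classic); first exact: measurable_itv.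
by apply/seteqP; split=> x; rewrite /= in_itv.
Qed.

Section breach_levels.
Context {d : measure_display} {Omega : measurableType d} {R : realType}.

Lemma mutually_independentS (P : probability Omega R) (I : eqType) (D : set I)
    (F F' : I -> set (set Omega)) :
  (forall i, D i -> F' i `<=` F i) ->
  mutually_independent P D F -> mutually_independent P D F'.
Proof.
move=> F'F indF J E uJ JE; apply: indF => // i iJ.
by have [Di F'Ei] := JE i iJ; split=> //; exact: F'F.
Qed.

Lemma ae_mem_of_cond_law {P : probability Omega R} {Y G : Omega -> R}
    {I : set R} {c : R} :
  measurable I -> measurable_fun setT Y ->
  (forall B, measurable B -> P (Y @^-1` B) = (fine (P (G @^-1` (B `&` I))) / c)%:E) ->
  {ae P, forall w, I (Y w)}.
Proof.
move=> mI mY lawY; exists (Y @^-1` ~` I); split=> //.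
  by rewrite -[X in measurable X]setTI; apply: mY => //; exact: measurableC.
by rewrite lawY ?setICl ?preimage_set0 ?measure0 ?mul0r //; exact: measurableC.
Qed.

Lemma cond_quantile_homo (Ft : R -> (nat -> R) -> R) (y : nat -> R) :
  {homo cond_quantile Ft y : u v / u <= v >-> (u <= v)%E}.
Proof.
move=> u v uv; apply: ereal_inf_le_tmp => _ [x vx <-]; exists x => //.
exact: le_trans uv vx.
Qed.

Lemma breach_homo (L : nat -> Omega -> R) (F : nat -> R -> (nat -> R) -> R)
    (Gtj : nat -> nat -> Omega -> R) t i j w :
  Gtj t i w <= Gtj t j w -> breach L F Gtj t i w -> breach L F Gtj t j w.
Proof.
move=> Gij; apply: le_lt_trans; apply: cond_quantile_homo.
by rewrite lerD2l lerN2.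
Qed.

Lemma breach_countE (L : nat -> Omega -> R) (F : nat -> R -> (nat -> R) -> R)
    (Gtj : nat -> nat -> Omega -> R) m t w :
  breach_count L F Gtj m t w = count (breach L F Gtj t ^~ w) (iota 1 m.+1).
Proof. by rewrite /breach_count sum_nat_of_bool_count /index_iota subn1. Qed.

End breach_levels.

Lemma increasing_brackets_homo (R : realDomainType) (alpha x : nat -> R) N :
  (forall j, (j <= N)%N -> alpha j < alpha j.+1) ->
  (forall j, (0 < j <= N.+1)%N -> alpha j.-1 <= x j < alpha j) ->
  forall i j, (0 < i)%N -> (i <= j <= N.+1)%N -> x i <= x j.
Proof.
move=> alpha_lt x_in i j i0 /andP[ij jN].
have alpha_le :
    {in [pred k | (k <= N.+1)%N] &, {homo alpha : k l / (k <= l)%N >-> k <= l}}.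
  apply: homo_leq_in => [k|l k r|k l|k _].
  - exact: le_refl.
  - exact: le_trans.
  - by move=> _; rewrite inE => lN k' /andP[_ k'l]; rewrite inE; lia.
  - by rewrite inE ltnS => kN; exact/ltW/alpha_lt.
have [<-//|ltij] := eqVneq i j.
have /andP[_ xi_lt] := x_in i ltac:(lia); have /andP[xj_ge _] := x_in j ltac:(lia).
apply/ltW/(lt_le_trans xi_lt)/(le_trans _ xj_ge)/alpha_le; rewrite ?inE; lia.
Qed.

Theorem lemma3p2 (d : measure_display) (Omega : measurableType d)
  (R : realType) (P : probability Omega R) (n m : nat)
  (L M : nat -> Omega -> R) (F : nat -> R -> (nat -> R) -> R)
  (g : R -> R) (G : Omega -> R) (alpha : nat -> R)
  (Gtj : nat -> nat -> Omega -> R) :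
  (1 <= n)%N ->
  (forall t, (1 <= t <= n)%N ->
     measurable_fun setT (L t) /\ measurable_fun setT (M t)) ->
  (forall t, (1 <= t <= n)%N -> is_cond_cdf P M t (F t)) ->
  (forall t (y : nat -> R), (1 <= t <= n)%N -> continuous (fun x => F t x y)) ->
  distortion g ->
  (forall u, 0 < u <= 1 -> g x @[x --> u^'-] --> g u) ->
  measurable_fun setT G ->
  (forall w, 0 <= G w <= 1) ->
  (forall u, 0 <= u <= 1 -> P [set w | G w < u] = (g u)%:E) ->
  mutually_independent P setT
    (fun b : bool => if b then sigmaR G else sigma_LM n L M) ->
  alpha 0%N = 0 -> alpha m.+1 = 1 ->
  (forall j, (j <= m)%N -> alpha j < alpha j.+1) ->
  (forall j, (1 <= j <= m.+1)%N -> g (alpha j) - g (alpha j.-1) != 0) ->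
  (forall t j, (1 <= t <= n)%N -> (1 <= j <= m.+1)%N ->
     measurable_fun setT (Gtj t j) /\
     forall B : set R, measurable B ->
       P (Gtj t j @^-1` B) =
       (fine (P (G @^-1` (B `&` itv_co (alpha j.-1) (alpha j))))
        / fine (P (G @^-1` itv_co (alpha j.-1) (alpha j))))%:E) ->
  mutually_independent P
    (fun i : option (nat * nat) => match i with
       | None => True
       | Some (t, j) => (1 <= t <= n)%N /\ (1 <= j <= m.+1)%N end)
    (fun i => match i with
       | None => sigma_LM n L M
       | Some (t, j) => sigmaR (Gtj t j) end) ->
  (forall t j, (1 <= t <= n)%N -> (1 <= j <= m.+1)%N ->
     measurable [set w | breach L F Gtj t j w]) ->
  (* assumption (∗) *)
  (forall t j, (1 <= t <= n)%N -> (1 <= j <= m.+1)%N ->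
     P [set w | breach L F Gtj t j w] =
     (fine (\int[P]_(w in G @^-1` itv_co (alpha j.-1) (alpha j)) (G w)%:E)%E
      / (g (alpha j) - g (alpha j.-1)))%:E) ->
  mutually_independent P [set t | (1 <= t <= n)%N]
    (fun t => [set [set w | S (breach_vec L F Gtj m t w)] | S in [set: set (seq bool)]]) ->
  (forall t, (1 <= t <= n)%N ->
     (forall k, (k <= m)%N ->
        P [set w | (breach_count L F Gtj m t w <= k)%N] =
        (1 - fine (\int[P]_(w in G @^-1` itv_co (alpha (m - k)%N) (alpha (m - k)%N.+1))
                      (G w)%:E)%E
             / (g (alpha (m - k)%N.+1) - g (alpha (m - k)%N)))%:E) /\
     P [set w | (breach_count L F Gtj m t w <= m.+1)%N] = 1%E) /\
  mutually_independent P [set t | (1 <= t <= n)%N]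
    (fun t => [set breach_count L F Gtj m t @^-1` S | S in [set: set nat]]).
Proof.
(* The hypotheses on L, M, F, g, G and the independence of the G_{t,j} only
   make (∗) meaningful; the argument itself does not use them. *)
move=> _ _ _ _ _ _ _ _ _ _ _ _ alpha_lt _ lawGtj _ mbreach star indep_vec.
split; last first.
  apply: mutually_independentS indep_vec => t _ _ [S _ <-].
  exists [set v | S (count id v)] => //.
  by apply/funext => w; rewrite /preimage /= breach_countE count_map.
move=> t tn.
have ae_bracket : {ae P, forall w j, (0 < j <= m.+1)%N ->
    alpha j.-1 <= Gtj t j w < alpha j}.
  apply: ae_foralln => j; have [jm|jm] := boolP (0 < j <= m.+1)%N; last first.
    by apply: aeW => w /negP.
  have [mGtj lawG] := lawGtj t j tn jm.
  by apply: filterS (ae_mem_of_cond_law (measurable_itv_co _ _) mGtj lawG) => w + _.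
have ae_upclosed : {ae P, forall w i j, (0 < i)%N -> (i <= j <= m.+1)%N ->
    breach L F Gtj t i w -> breach L F Gtj t j w}.
  apply: filterS ae_bracket => w inbr i j i0 ij.
  apply: breach_homo.
  exact: (@increasing_brackets_homo _ alpha (Gtj t ^~ w) m alpha_lt inbr i j i0 ij).
split=> [k km|].
- have jm : (0 < (m - k).+1 <= m.+1)%N by lia.
  transitivity (P (~` [set w | breach L F Gtj t (m - k).+1 w])); last first.
    rewrite probability_setC ?(star t _ tn jm) ?EFinB //; exact: mbreach.
  apply: ae_eq_set_measure.
  + rewrite /breach_count; apply: (measurable_sum_bool (fun c => c <= k)%N) => j.
    by rewrite mem_index_iota; exact: mbreach.
  + exact/measurableC/mbreach.
  apply: filterS ae_upclosed => w up.
  by rewrite /= breach_countE count_upclosed_iota_leqE //; split=> /negP.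
- rewrite [X in P X](_ : _ = setT) ?probability_setT //.
  apply/seteqP; split=> // w _.
  by rewrite /= breach_countE (leq_trans (count_size _ _)) ?size_iota.
Qed.
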